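(* Assume $\mathbb F$ is algebraically closed with $\operatorname{char}\mathbb F=0$, and let $d\in\mathbb N$. If $V$ is a $(d+1)$-dimensional irreducible $\Re$-module, then there exist $a,b,c\in\mathbb F$ such that $R_d(a,b,c)$ is isomorphic to $V$.
   Context: The Racah algebra $\Re$ is the unital associative $\mathbb F$-algebra with generators $A,B,C,D$ and relations $[A,B]=[B,C]=[C,A]=2D$ together with the requirement that each of $\alpha:=[A,D]+AC-BA$, $\beta:=[B,D]+BA-CB$, $\gamma:=[C,D]+CB-AC$ is central in $\Re$; $\delta:=A+B+C$. For $a,b,c\in\mathbb F$ and $d\in\mathbb N$ set $\theta_i=(a+\tfrac d2-i)(a+\tfrac d2-i+1)$, $\theta_i^*=(b+\tfrac d2-i)(b+\tfrac d2-i+1)$, $\varphi_i=i(i-d-1)(a+b+c+\tfrac d2-i+2)(a+b-c+\tfrac d2-i+1)$. $R_d(a,b,c)$ denotes the $(d+1)$-dimensional $\Re$-module with a basis $v_0,\dots,v_d$ such that $Av_i=\theta_iv_i+v_{i+1}$ ($v_{d+1}=0$), $Bv_i=\theta_i^*v_i+\varphi_iv_{i-1}$ ($v_{-1}=0$), and $\alpha,\beta,\delta$ act as the scalars $(c-b)(c+b+1)(a-\tfrac d2)(a+\tfrac d2+1)$, $(a-c)(a+c+1)(b-\tfrac d2)(b+\tfrac d2+1)$, $\tfrac d2(\tfrac d2+1)+a(a+1)+b(b+1)+c(c+1)$ respectively (exists, unique up to isomorphism). *)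

From HB Require Import structures.
From mathcomp Require Import all_boot all_order all_algebra all_field.
Set Implicit Arguments. Unset Strict Implicit. Unset Printing Implicit Defensive.
Import GRing.Theory.
Local Open Scope ring_scope.

(* A finite-dimensional module over the Racah algebra on F^n, given by the
   matrices (acting on column vectors, v |-> X *m v) of the generators A,B,C,D. *)
Record racah_rep (F : fieldType) (n : nat) := RacahRep {
  rA : 'M[F]_n; rB : 'M[F]_n; rC : 'M[F]_n; rD : 'M[F]_n }.

Section Racah.
Variables (F : fieldType) (n : nat).

Definition comm (X Y : 'M[F]_n) : 'M[F]_n := X *m Y - Y *m X.

Definition ralpha (V : racah_rep F n) : 'M[F]_n :=
  comm (rA V) (rD V) + rA V *m rC V - rB V *m rA V.
Definition rbeta (V : racah_rep F n) : 'M[F]_n :=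
  comm (rB V) (rD V) + rB V *m rA V - rC V *m rB V.
Definition rgamma (V : racah_rep F n) : 'M[F]_n :=
  comm (rC V) (rD V) + rC V *m rB V - rA V *m rC V.
Definition rdelta (V : racah_rep F n) : 'M[F]_n := rA V + rB V + rC V.

Definition commutes_gens (V : racah_rep F n) (X : 'M[F]_n) : Prop :=
  [/\ X *m rA V = rA V *m X, X *m rB V = rB V *m X,
      X *m rC V = rC V *m X & X *m rD V = rD V *m X].

Definition is_racah_module (V : racah_rep F n) : Prop :=
  [/\ comm (rA V) (rB V) = (rD V) *+ 2,
      comm (rB V) (rC V) = (rD V) *+ 2 &
      comm (rC V) (rA V) = (rD V) *+ 2] /\
  [/\ commutes_gens V (ralpha V),
      commutes_gens V (rbeta V) &
      commutes_gens V (rgamma V)].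

(* Irreducible: n > 0 and every subspace (column space of U) invariant
   under A, B, C, D is 0 or everything. *)
Definition racah_irreducible (V : racah_rep F n) : Prop :=
  (0 < n)%N /\
  forall U : 'M[F]_n,
    (((rA V *m U)^T <= U^T)%MS /\ ((rB V *m U)^T <= U^T)%MS /\
     ((rC V *m U)^T <= U^T)%MS /\ ((rD V *m U)^T <= U^T)%MS) ->
    \rank U = 0%N \/ \rank U = n.

Definition racah_iso (V W : racah_rep F n) : Prop :=
  exists2 P : 'M[F]_n, P \in unitmx &
    [/\ P *m rA V = rA W *m P, P *m rB V = rB W *m P,
        P *m rC V = rC W *m P & P *m rD V = rD W *m P].
End Racah.

Section Rd.
Variables (F : fieldType).

Definition half_d (d : nat) : F := d%:R / 2.

Definition theta (a : F) (d i : nat) : F :=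
  (a + half_d d - i%:R) * (a + half_d d - i%:R + 1).

Definition phi (a b c : F) (d i : nat) : F :=
  i%:R * (i%:R - d%:R - 1) * (a + b + c + half_d d - i%:R + 2)
       * (a + b - c + half_d d - i%:R + 1).

(* Matrix of A in the basis v_0..v_d: A v_j = theta_j v_j + v_{j+1}. *)
Definition RdA (a : F) (d : nat) : 'M[F]_d.+1 :=
  \matrix_(i, j) (if i == j then theta a d j
                  else if nat_of_ord i == (nat_of_ord j).+1 then 1 else 0).

(* Matrix of B: B v_j = theta*_j v_j + phi_j v_{j-1}. *)
Definition RdB (a b c : F) (d : nat) : 'M[F]_d.+1 :=
  \matrix_(i, j) (if i == j then theta b d j
                  else if (nat_of_ord i).+1 == nat_of_ord j then phi a b c d j
                  else 0).

Definition alpha_scal (a b c : F) (d : nat) : F :=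
  (c - b) * (c + b + 1) * (a - half_d d) * (a + half_d d + 1).
Definition beta_scal (a b c : F) (d : nat) : F :=
  (a - c) * (a + c + 1) * (b - half_d d) * (b + half_d d + 1).
Definition delta_scal (a b c : F) (d : nat) : F :=
  half_d d * (half_d d + 1) + a * (a + 1) + b * (b + 1) + c * (c + 1).

(* V (on F^(d+1), standard basis = v_0..v_d) is the module R_d(a,b,c). *)
Definition is_Rd (d : nat) (a b c : F) (V : racah_rep F d.+1) : Prop :=
  [/\ is_racah_module V,
      rA V = RdA a d &
      rB V = RdB a b c d] /\
  [/\ ralpha V = (alpha_scal a b c d)%:M,
      rbeta V = (beta_scal a b c d)%:M &
      rdelta V = (delta_scal a b c d)%:M].
End Rd.
Arguments is_Rd {F} d a b c V.

Set Warnings "-notation-overridden,-ambiguous-paths,-deprecated-syntactic-definition-since-mathcomp-2.4.0".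
From HB Require Import structures.
From mathcomp Require Import all_boot all_order all_algebra all_field.
From mathcomp Require Import ring zify.
Set Implicit Arguments. Unset Strict Implicit. Unset Printing Implicit Defensive.
Import GRing.Theory.
Local Open Scope ring_scope.

(* Schur's lemma makes alpha, beta and delta scalars. Written on row vectors
   (a := A^T, b := B^T), the pair then satisfies the Askey-Wilson relations
     a^2 b - 2 a b a + b a^2 = 2 (a^2 + a b + b a - delta a + alpha)
   and the same with a, b exchanged and alpha replaced by -beta, while C and D
   are polynomials in a and b, so {a, b} acts irreducibly.
   Put th u = u (u + 1). In characteristic 0 each of a, b has an eigenvalue
   th y such that th (y + 1) is not an eigenvalue. From such an eigenvector of
   one matrix, the vectors v_(i+1) = v_i (K - kap_i) span a flag on which the
   other matrix is triangular with diagonal th (y - i). Two flags built this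
   way in opposite directions are forced by irreducibility to be opposite, so
   in the basis (v_i) a is lower and b upper bidiagonal. The relations then
   give a second-order recurrence for the superdiagonal of b with zero boundary
   values, which identifies it, and alpha, beta, delta, with those of
   R_d(a, b, c). *)

Lemma eq_of_subr (R : comNzRingType) (x y x' y' : R) :
  x' = y' -> x - y = x' - y' -> x = y.
Proof. by move=> -> /eqP; rewrite subrr subr_eq0 => /eqP. Qed.

Lemma eq_of_lincomb (R : comNzRingType) (x y l1 r1 l2 r2 k1 k2 : R) :
  l1 = r1 -> l2 = r2 -> x - y = k1 * (l1 - r1) + k2 * (l2 - r2) -> x = y.
Proof. by move=> -> -> /eqP; rewrite !subrr !mulr0 addr0 subr_eq0 => /eqP. Qed.

Lemma natr_inj_pchar0 (F : idomainType) : [pchar F] =i pred0 ->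
  injective (fun i : nat => i%:R : F).
Proof.
move=> charF0 i j; have h := (pcharf0P F).1 charF0.
wlog ij : i j / (i <= j)%N => [hw|].
  by case: (leqP i j) => [/hw//|/ltnW /hw hji /esym /hji ->].
by move=> e; apply/eqP; rewrite eqn_leq ij /= -subn_eq0 -h natrB // e subrr eqxx.
Qed.

(* [theta a d i] is convertible to [th (a + half_d d - i%:R)]. *)
Definition th (R : nzRingType) (u : R) := u * (u + 1).

Lemma th_rec (R : comNzRingType) (y : R) i :
  th (y - (i.+2)%:R) = 2 + 2 * th (y - (i.+1)%:R) - th (y - i%:R).
Proof. by rewrite -!natr1 /th; ring. Qed.

Section PairRelations.
Variables (F : fieldType) (n : nat).

Definition aw_rel (K T : 'M[F]_n) (dl k : F) : Prop :=
  K *m K *m T - 2 *: (K *m T *m K) + T *m K *m K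
  = 2 *: (K *m K + K *m T + T *m K - dl *: K + k%:M).

Definition pair_irreducible (K T : 'M[F]_n) : Prop :=
  forall S : 'M[F]_n, (S *m K <= S)%MS -> (S *m T <= S)%MS ->
  \rank S = 0%N \/ \rank S = n.

Lemma pair_irreducibleC K T : pair_irreducible K T -> pair_irreducible T K.
Proof. by move=> irr S hT hK; apply: irr. Qed.
End PairRelations.

Fixpoint kseq (F : fieldType) n (K : 'M[F]_n) (kap : nat -> F) (v0 : 'rV[F]_n) i
    : 'rV[F]_n :=
  if i is i'.+1 then kseq K kap v0 i' *m K - kap i' *: kseq K kap v0 i' else v0.

Definition kspan (F : fieldType) n (K : 'M[F]_n) kap v0 k : 'M[F]_n :=
  \matrix_(i < n) (if (i < k)%N then kseq K kap v0 i else 0).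

Section Flag.
Variables (F : fieldType) (n : nat) (K T : 'M[F]_n) (dl k1 : F).
Hypothesis awKT : aw_rel K T dl k1.

(* When m2 = 2 + 2 m1 - m0 the relation applied to g1 expresses the defect E of
   g3 through g1, g2 and the defects u0, u1 of g1, g2: this is how triangularity
   of T propagates along the flag. *)
Lemma aw_flag_defect (g1 g2 g3 u0 u1 E : 'rV[F]_n) (t0 t1 m0 m1 m2 : F) :
  m2 = 2 + 2 * m1 - m0 ->
  g1 *m K = t0 *: g1 + g2 -> g2 *m K = t1 *: g2 + g3 ->
  g1 *m T = m0 *: g1 + u0 -> g2 *m T = m1 *: g2 + u1 -> g3 *m T = m2 *: g3 + E ->
  E = (2 * (t0 * t0 + 2 * t0 * m0 - dl * t0 + k1)) *: g1
      + (2 * (t0 + t1 + m0 + m1 - dl) - (t0 - t1) * (m1 - m0)) *: g2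
      + (2 * t0 - t0 * t0) *: u0 + (2 - t0 - t1) *: u1
      + (2 + 2 * t0) *: (u0 *m K) + 2 *: (u1 *m K) - u0 *m K *m K.
Proof.
move=> hm e1 e2 e3 e4 e5.
have := congr1 (mulmx g1) awKT.
rewrite !mulmxDr !mulmxN !mulmxA -!scalemxAr !mulmxDr !mulmxN !mulmxA -!scalemxAr mul_mx_scalar.
rewrite ?(e1, e2, e3, e4, e5, mulmxDl, =^~scalemxAl, scalerDr, scalerA).
move: (u0 *m K *m K) => w; move: (u0 *m K) (u1 *m K) => x0 x1 H.
apply/rowP => j; have := congr1 (fun M : 'rV_n => M 0 j) H; rewrite !mxE => {}H.
apply: eq_of_subr H _; rewrite hm; ring.
Qed.

Variables (kap tau : nat -> F) (v0 : 'rV[F]_n).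
Hypothesis tau_rec : forall i, tau i.+2 = 2 + 2 * tau i.+1 - tau i.
Local Notation v := (kseq K kap v0).
Local Notation Sv := (kspan K kap v0).

Lemma row_kspan k (i : 'I_n) : row i (Sv k) = if (i < k)%N then v i else 0.
Proof. by rewrite rowK. Qed.

Lemma kseq_kspan k i : (i < k)%N -> (i < n)%N -> (v i <= Sv k)%MS.
Proof. by move=> ik iN; apply: (eq_row_sub (Ordinal iN)); rewrite row_kspan /= ik. Qed.

Lemma kspan_mono k l : (k <= l)%N -> (Sv k <= Sv l)%MS.
Proof.
move=> kl; apply/row_subP => i; rewrite row_kspan; case: ifP => ik; last exact: sub0mx.
by apply: kseq_kspan => //; exact: leq_trans ik kl.
Qed.

Lemma kspan0 : Sv 0 = 0.
Proof. by apply/matrixP => i j; rewrite !mxE. Qed.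

Lemma kseqS i : v i *m K = kap i *: v i + v i.+1.
Proof. by rewrite /= addrC subrK. Qed.

Lemma kspanMK k : (k < n)%N -> (Sv k *m K <= Sv k.+1)%MS.
Proof.
move=> kn; apply/row_subP => i; rewrite row_mul row_kspan.
case: ifP => ik; last by rewrite mul0mx sub0mx.
rewrite kseqS; apply: addmx_sub; last by apply: kseq_kspan => //; exact: leq_ltn_trans ik kn.
by apply: scalemx_sub; apply: kseq_kspan; [exact: ltnW | exact: ltn_trans ik kn].
Qed.

Lemma submx_kspanMK (u : 'rV[F]_n) k :
  (u <= Sv k)%MS -> (k < n)%N -> (u *m K <= Sv k.+1)%MS.
Proof. by move=> uk kn; apply: submx_trans (submxMr K uk) (kspanMK kn). Qed.

Definition T_trig m := forall k, (k < m)%N -> (k < n)%N ->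
  (v k *m T - tau k *: v k <= Sv k)%MS.

Lemma kspanMT m : T_trig m -> (Sv m *m T <= Sv m)%MS.
Proof.
move=> trig; apply/row_subP => i; rewrite row_mul row_kspan.
case: ifP => im; last by rewrite mul0mx sub0mx.
rewrite -(subrK (tau i *: v i) (v i *m T)); apply: addmx_sub.
  by apply: submx_trans (trig _ im (ltn_ord i)) (kspan_mono (ltnW im)).
by apply: scalemx_sub; apply: kseq_kspan.
Qed.

Lemma submx_kspanMT (u : 'rV[F]_n) m :
  (u <= Sv m)%MS -> T_trig m -> (u *m T <= Sv m)%MS.
Proof. by move=> um trig; apply: submx_trans (submxMr T um) (kspanMT trig). Qed.

Lemma T_trig_step i : (i.+2 < n)%N -> T_trig i.+2 -> T_trig i.+3.
Proof.
move=> iN trig k; rewrite ltnS leq_eqVlt => /orP[/eqP -> _|]; last exact: trig.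
have i1N : (i.+1 < n)%N by exact: ltn_trans iN.
have i0N : (i < n)%N by exact: ltn_trans i1N.
have trig0 := trig i (ltnW (ltnSn _)) i0N.
have trig1 := trig i.+1 (ltnSn _) i1N.
have split_T j : v j *m T = tau j *: v j + (v j *m T - tau j *: v j).
  by rewrite addrC subrK.
rewrite (aw_flag_defect (tau_rec i) (kseqS i) (kseqS i.+1) (split_T i) (split_T i.+1)
  (split_T i.+2)).
have S02 : (Sv i <= Sv i.+2)%MS by apply: kspan_mono; exact: leqW.
have S12 : (Sv i.+1 <= Sv i.+2)%MS by apply: kspan_mono.
repeat apply: addmx_sub; try apply: scalemx_sub.
- by apply: kseq_kspan.
- by apply: kseq_kspan.
- exact: submx_trans trig0 S02.
- exact: submx_trans trig1 S12.
- by apply: submx_trans (submx_kspanMK trig0 i0N) S12.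
- by apply: submx_kspanMK.
- by rewrite -scaleN1r; apply: scalemx_sub; apply: submx_kspanMK => //; exact: submx_kspanMK.
Qed.

Hypothesis v0_eigen : v0 *m T = tau 0 *: v0.
Hypothesis kseq1_trig : exists c, v 1 *m T - tau 1 *: v 1 = c *: v0.

Lemma T_trig_all m : T_trig m.
Proof.
elim: m => [k //|m IH] k; rewrite ltnS leq_eqVlt => /orP[/eqP ->|]; last exact: IH.
case: m IH => [|[|i]] IH mN.
- by rewrite /= v0_eigen subrr sub0mx.
- case: kseq1_trig => c ->; apply: scalemx_sub.
  by apply: (@kseq_kspan 1 0) => //; exact: ltn_trans mN.
- exact: (T_trig_step mN IH).
Qed.

Lemma kspanS_split k : (Sv k.+1 <= Sv k + v k)%MS.
Proof.
apply/row_subP => i; rewrite row_kspan; case: ifP => ik; last exact: sub0mx.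
move: ik; rewrite ltnS leq_eqVlt => /orP[/eqP ->|ik]; first exact: addsmxSr.
by apply: submx_trans (addsmxSl _ _); apply: kseq_kspan.
Qed.

Lemma rank_kspan_le k : (\rank (Sv k) <= k)%N.
Proof.
elim: k => [|k IH]; first by rewrite kspan0 mxrank0.
apply: leq_trans (mxrankS (kspanS_split k)) _.
apply: leq_trans (mxrank_adds_leqif _ _) _.
by rewrite -(addn1 k); exact: leq_add IH (rank_leq_row _).
Qed.

Lemma kspanS_dec (u : 'rV[F]_n) k :
  (u <= Sv k.+1)%MS -> exists c, (u - c *: v k <= Sv k)%MS.
Proof.
move/(submx_trans)/(_ (kspanS_split k)) => /sub_addsmxP[[a b] /= ->].
exists (b 0 0).
have -> : b *m v k = b 0 0 *: v k by rewrite {1}[b]mx11_scalar mul_scalar_mx.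
by rewrite addrK; exact: submxMl.
Qed.

Lemma kspan_lower (z : 'rV[F]_n) m : (m < n)%N -> (z <= Sv m.+1)%MS ->
  (z *m (T - (tau m)%:M) <= Sv m)%MS.
Proof.
move=> mn /kspanS_dec[c hc].
rewrite -(subrK (c *: v m) z) mulmxDl; apply: addmx_sub.
  rewrite mulmxBr mul_mx_scalar; apply: addmx_sub.
    exact: submx_kspanMT hc (@T_trig_all m).
  by rewrite -scaleNr; apply: scalemx_sub.
rewrite -scalemxAl; apply: scalemx_sub; rewrite mulmxBr mul_mx_scalar.
exact: T_trig_all.
Qed.

Hypothesis irrKT : pair_irreducible K T.
Hypothesis v0_neq0 : v0 != 0.

Lemma kseq_notin_kspan k : (k < n)%N -> ~~ (v k <= Sv k)%MS.
Proof.
move=> kn; apply/negP => Hk.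
have invK : (Sv k *m K <= Sv k)%MS.
  apply/row_subP => i; rewrite row_mul row_kspan.
  case: ifP => ik; last by rewrite mul0mx sub0mx.
  rewrite kseqS; apply: addmx_sub; first by apply: scalemx_sub; apply: kseq_kspan.
  case: (ltnP i.+1 k) => h; first by apply: kseq_kspan => //; exact: ltn_trans h kn.
  by have -> : i.+1 = k by apply/eqP; rewrite eqn_leq h ik.
case: (irrKT invK (kspanMT (@T_trig_all k))) => [/eqP|hr].
  rewrite mxrank_eq0 => /eqP S0; move: v0_neq0; apply/negP/negPn; clear invK.
  case: k kn Hk S0 => [|k] kn Hk S0; first by move: Hk; rewrite S0 submx0.
  apply/eqP; apply: (@submx0null _ 1 n n); rewrite -S0.
  exact: (@kseq_kspan k.+1 0 (ltn0Sn _) (ltn_trans (ltn0Sn k) kn)).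
by move: (rank_kspan_le k); rewrite hr leqNgt kn.
Qed.

Lemma rank_kspan k : (k <= n)%N -> \rank (Sv k) = k.
Proof.
elim: k => [|k IH] kn; first by rewrite kspan0 mxrank0.
apply/eqP; rewrite eqn_leq rank_kspan_le /=.
have lt : (Sv k < Sv k.+1)%MS.
  rewrite ltmxE kspan_mono //=; apply/negP => h.
  by move: (kseq_notin_kspan kn); rewrite (submx_trans _ h) //; exact: kseq_kspan.
by move: (rank_ltmx lt); rewrite IH // ltnW.
Qed.

Lemma kspan_full (u : 'rV[F]_n) : (u <= Sv n)%MS.
Proof. by apply: submx_full; rewrite /row_full rank_kspan. Qed.

Lemma kseq_descend (kap' : nat -> F) (u0 : 'rV[F]_n) :
  (forall k, (k < n)%N -> kap' k = tau (n.-1 - k)) ->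
  forall k, (k <= n)%N -> (kseq T kap' u0 k <= Sv (n - k))%MS.
Proof.
move=> hkap; elim=> [_|k IH kn]; first by rewrite subn0; exact: kspan_full.
have -> : kseq T kap' u0 k.+1 = kseq T kap' u0 k *m (T - (tau (n.-1 - k))%:M).
  by rewrite /= mulmxBr mul_mx_scalar hkap.
have -> : (n - k.+1 = n.-1 - k)%N by lia.
apply: kspan_lower; first lia.
have -> : (n.-1 - k).+1 = (n - k)%N by lia.
exact: IH (ltnW kn).
Qed.
End Flag.

Lemma aw_lowering_step (F : fieldType) n (K T : 'M[F]_n) (dl k2 : F)
    (v0 : 'rV[F]_n) (y kap0 : F) :
  aw_rel T K dl k2 -> v0 != 0 -> v0 *m T = th y *: v0 ->
  ~~ eigenvalue T (th (y + 1)) ->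
  exists c, (v0 *m K - kap0 *: v0) *m T - th (y - 1) *: (v0 *m K - kap0 *: v0)
            = c *: v0.
Proof.
move=> awTK v0nz e0 noeig.
have hne : th y - th (y + 1) != 0.
  apply: contra noeig => /eqP h; apply/eigenvalueP; exists v0 => //.
  by rewrite e0; congr (_ *: _); apply/eqP; rewrite -subr_eq0 h.
set w := v0 *m K.
set c' := 2 * (th y * th y - dl * th y + k2) / (th y - th (y + 1)).
have R := congr1 (mulmx v0) awTK.
rewrite !mulmxDr !mulmxN !mulmxA -!scalemxAr !mulmxDr !mulmxN !mulmxA -!scalemxAr in R.
rewrite mul_mx_scalar !e0 -!scalemxAl !e0 -!scalemxAl !scalerA -/w in R.
(* z is an eigenvector for th (y + 1), hence zero. *)
set z := w *m T - th (y - 1) *: w - c' *: v0.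
have ez : z *m T = th (y + 1) *: z.
  rewrite /z !mulmxDl !mulNmx -!scalemxAl e0.
  move: (w *m T *m T) (w *m T) R => wTT wT R.
  apply/rowP => j; have := congr1 (fun M : 'rV_n => M 0 j) R; rewrite !mxE => {}R.
  apply: eq_of_subr R _; rewrite /c' /th; field.
  by move: hne; rewrite /th.
have z0 : z = 0.
  by apply/eqP; apply: contraNT noeig => zn; apply/eigenvalueP; exists z.
have wT : w *m T = th (y - 1) *: w + c' *: v0.
  by move/eqP: z0; rewrite /z subr_eq0 => /eqP <-; rewrite addrC subrK.
exists (c' - kap0 * (th y - th (y - 1))).
rewrite mulmxDl mulNmx -scalemxAl e0 wT; apply/rowP => j; rewrite !mxE; ring.
Qed.

(* In characteristic 0 the values u, u + 1, u + 2, ... cannot all be roots of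
   the nonzero polynomial (char_poly M) \Po ('X^2 + 'X). *)
Lemma exists_extremal_eigen (F : closedFieldType) n (M : 'M[F]_n) :
  [pchar F] =i pred0 -> (0 < n)%N ->
  exists y : F, exists2 v : 'rV_n, v != 0 &
    v *m M = th y *: v /\ ~~ eigenvalue M (th (y + 1)).
Proof.
move=> charF0 n0.
set p := char_poly M.
set q : {poly F} := 'X^2 + 'X.
have sq : size q = 3%N by rewrite /q size_polyDl ?size_polyXn ?size_polyX.
set P := p \Po q.
have Pz : P != 0.
  rewrite /P comp_poly_eq0 ?sq //; apply/eqP => p0.
  by move: (size_char_poly M); rewrite -/p p0 size_poly0.
have PE u : P.[u] = p.[th u] by rewrite /P horner_comp /q !hornerE /th; congr (p.[_]); ring.
have [u0 ru0] : exists u, root P u.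
  have [l rl] : exists l, root p l.
    by apply/closed_rootP; rewrite size_char_poly eqSS -lt0n.
  have [u ru] : exists u, root ('X^2 + 'X - l%:P) u.
    apply/closed_rootP; rewrite size_addl ?size_polyC ?sq //.
    by rewrite size_polyN size_polyC; case: (l == 0).
  exists u; move: ru rl; rewrite /root PE !hornerE => /eqP h.
  by have -> : th u = l by rewrite /th; apply/eqP; rewrite -subr_eq0 -h; apply/eqP; ring.
have roots_or_gap N : (forall k, (k < N)%N -> root P (u0 + k%:R)) \/
                      (exists u, root P u && ~~ root P (u + 1)).
  elim: N => [|N [IH|IH]]; [by left | | by right].
  case rN : (root P (u0 + N%:R)).
    by left => k; rewrite ltnS leq_eqVlt => /orP[/eqP ->//|]; apply: IH.
  case: N IH rN => [|N] IH rN; first by move: rN; rewrite addr0 ru0.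
  by right; exists (u0 + N%:R); rewrite -addrA natr1 rN IH.
have [allr|[y /andP[ry nry]]] := roots_or_gap (size P).
  have H := max_poly_roots Pz (rs := [seq u0 + k%:R | k <- iota 0 (size P)]).
  suff : (size [seq (u0 + k%:R)%R | k <- iota 0 (size P)] < size P)%N.
    by rewrite size_map size_iota ltnn.
  apply: H.
  - by apply/allP => x /mapP[k]; rewrite mem_iota add0n => /andP[_ kP] ->; apply: allr.
  - by rewrite map_inj_uniq ?iota_uniq // => i j /addrI; exact: natr_inj_pchar0.
exists y.
have : eigenvalue M (th y) by rewrite eigenvalue_root_char -/p /root -PE.
move/eigenvalueP => [v ev vnz]; exists v => //; split => //.
by rewrite eigenvalue_root_char -/p /root -PE.
Qed.

Section OppositeFlags.
Variables (F : fieldType) (d : nat).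
Local Notation n := d.+1.
Variables (a b : 'M[F]_n) (dl ka kb : F).
Hypothesis awab : aw_rel a b dl ka.
Hypothesis awba : aw_rel b a dl kb.
Hypothesis irr : pair_irreducible a b.
Variables (kapv tauv kapw tauw : nat -> F) (v0 : 'rV[F]_n).
Hypothesis tauv_rec : forall i, tauv i.+2 = 2 + 2 * tauv i.+1 - tauv i.
Hypothesis tauw_rec : forall i, tauw i.+2 = 2 + 2 * tauw i.+1 - tauw i.
Local Notation v := (kseq a kapv v0).
Local Notation w0 := (kseq a kapv v0 d).
Local Notation w := (kseq b kapw w0).
Local Notation Sv := (kspan a kapv v0).
Local Notation Sw := (kspan b kapw w0).
Hypothesis v0_eigen : v0 *m b = tauv 0 *: v0.
Hypothesis v1_trig : exists c, v 1 *m b - tauv 1 *: v 1 = c *: v0.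
Hypothesis w0_eigen : w0 *m a = tauw 0 *: w0.
Hypothesis w1_trig : exists c, w 1 *m a - tauw 1 *: w 1 = c *: w0.
Hypothesis v0_neq0 : v0 != 0.
Hypothesis w0_neq0 : w0 != 0.
Hypothesis kapw_tauv : forall k, (k <= d)%N -> kapw k = tauv (d - k).
Hypothesis kapv_tauw : forall k, (k <= d)%N -> kapv k = tauw (d - k).

Let irrba := pair_irreducibleC irr.
Let lowv := kspan_lower awab tauv_rec v0_eigen v1_trig.
Let loww := kspan_lower awba tauw_rec w0_eigen w1_trig.

Definition flag_meet m := (Sv m :&: Sw (n - m))%MS.
Definition flag_meets := (\sum_(m < n.+1) flag_meet m)%MS.

Lemma flag_meet_sub m : (m <= n)%N -> (flag_meet m <= flag_meets)%MS.
Proof. by move=> hm; apply: (sumsmx_sup (Ordinal (hm : (m < n.+1)%N))). Qed.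

Lemma row_flag_meet (m : 'I_n.+1) (r : 'I_n) :
  (row r (flag_meet m) <= Sv m)%MS /\ (row r (flag_meet m) <= Sw (n - m))%MS.
Proof. by move: (row_sub r (flag_meet m)); rewrite sub_capmx => /andP. Qed.

Lemma flag_meetsMa : (flag_meets *m a <= flag_meets)%MS.
Proof.
rewrite sumsmxMr; apply/sumsmx_subP => m _; apply/row_subP => r; rewrite row_mul.
have [zv zw] := row_flag_meet m r; set z := row r (flag_meet m) in zv zw *.
have zY : (z <= flag_meets)%MS.
  exact: submx_trans (row_sub _ _) (flag_meet_sub (ltn_ord m)).
case: (ltnP m n) => hm; last first.
  have e : (n - m = 0)%N by lia.
  by move: zw; rewrite e kspan0 => /submx0null ->; rewrite mul0mx sub0mx.
rewrite -(subrK (kapv m *: z) (z *m a)); apply: addmx_sub; last exact: scalemx_sub.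
have -> : z *m a - kapv m *: z = z *m (a - (tauw (d - m))%:M).
  by rewrite mulmxBr mul_mx_scalar kapv_tauw //; lia.
apply: submx_trans (flag_meet_sub hm); rewrite sub_capmx; apply/andP; split.
  rewrite mulmxBr mul_mx_scalar; apply: addmx_sub; first exact: submx_kspanMK zv hm.
  rewrite -scaleNr; apply: scalemx_sub.
  exact: submx_trans zv (kspan_mono _ _ _ (leqnSn _)).
have -> : (n - m.+1 = d - m)%N by lia.
apply: loww; first lia.
by have -> : (d - m).+1 = (n - m)%N by lia.
Qed.

Lemma flag_meetsMb : (flag_meets *m b <= flag_meets)%MS.
Proof.
rewrite sumsmxMr; apply/sumsmx_subP => m _; apply/row_subP => r; rewrite row_mul.
have [zv zw] := row_flag_meet m r; set z := row r (flag_meet m) in zv zw *.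
have zY : (z <= flag_meets)%MS.
  exact: submx_trans (row_sub _ _) (flag_meet_sub (ltn_ord m)).
case: (posnP m) => hm0.
  by move: zv; rewrite hm0 kspan0 => /submx0null ->; rewrite mul0mx sub0mx.
have hm := ltn_ord m.
move: zv zw hm; have -> : (m : nat) = m.-1.+1 by rewrite prednK.
move: m.-1 => k zv zw hk.
rewrite -(subrK (tauv k *: z) (z *m b)); apply: addmx_sub; last exact: scalemx_sub.
have -> : z *m b - tauv k *: z = z *m (b - (tauv k)%:M) by rewrite mulmxBr mul_mx_scalar.
apply: submx_trans (flag_meet_sub (m := k) _); last lia.
rewrite sub_capmx; apply/andP; split; first by apply: lowv => //; lia.
rewrite mulmxBr mul_mx_scalar; apply: addmx_sub.
  have -> : (n - k = (n - k.+1).+1)%N by lia.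
  by apply: submx_kspanMK zw _; lia.
by rewrite -scaleNr; apply: scalemx_sub; apply: submx_trans zw (kspan_mono _ _ _ _); lia.
Qed.

(* The two flags are opposite: the m-th step of one meets the (n - m)-th step
   of the other trivially, since their meets span a proper invariant subspace. *)
Lemma flag_meet_eq0 m : (m <= n)%N -> (flag_meet m <= (0 : 'M_n))%MS.
Proof.
have meets_sub : (flag_meets <= Sw d)%MS.
  apply/sumsmx_subP => m' _; case: m' => [[|k] hk] /=.
    by rewrite /flag_meet kspan0; apply: submx_trans (capmxSl _ _) (sub0mx _ _).
  by apply: submx_trans (capmxSr _ _) (kspan_mono _ _ _ _); lia.
have meets0 : flag_meets = 0.
  case: (irr flag_meetsMa flag_meetsMb) => [/eqP|hr]; first by rewrite mxrank_eq0 => /eqP.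
  have := mxrankS meets_sub.
  by rewrite hr (rank_kspan awba tauw_rec w0_eigen w1_trig irrba w0_neq0 (leqnSn _)) ltnn.
by move=> hm; rewrite -meets0; apply: flag_meet_sub.
Qed.

Lemma kseq_opposite i : (i < n)%N -> exists2 l, l != 0 & w (d - i) = l *: v i.
Proof.
move=> iN.
have w_in_Sv : (w (d - i) <= Sv i.+1)%MS.
  have := kseq_descend awab tauv_rec v0_eigen v1_trig irr v0_neq0 w0 kapw_tauv
    (k := d - i) (leq_trans (leq_subr _ _) (leqnSn _)).
  by have -> : (n - (d - i) = i.+1)%N by lia.
have [l hl] := kspanS_dec w_in_Sv.
have h2 : (w (d - i) - l *: v i <= Sw (n - i))%MS.
  apply: addmx_sub; first by apply: kseq_kspan; lia.
  rewrite -scaleNr; apply: scalemx_sub.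
  by apply: (kseq_descend awba tauw_rec w0_eigen w1_trig irrba w0_neq0 v0 kapv_tauw); lia.
have : (w (d - i) - l *: v i <= (0 : 'M_n))%MS.
  by apply: submx_trans (flag_meet_eq0 (ltnW iN)); rewrite sub_capmx hl h2.
rewrite submx0 subr_eq0 => /eqP e; exists l => //.
apply/negP => /eqP l0; have hdi : (d - i < n)%N by lia.
move: (kseq_notin_kspan awba tauw_rec w0_eigen w1_trig irrba w0_neq0 hdi).
by rewrite e l0 scale0r sub0mx.
Qed.
End OppositeFlags.

Section Theta.
Variables (F : fieldType) (d : nat).

Lemma theta_shift (y : F) i : theta (y - half_d F d) d i = th (y - i%:R).
Proof. by rewrite /theta /th; congr (_ * _); ring. Qed.

Lemma theta_rec (y : F) i : theta y d i.+2 = 2 + 2 * theta y d i.+1 - theta y d i.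
Proof. exact: th_rec. Qed.

Lemma theta_reflect (y : F) k : (2 : F) != 0 -> (k <= d)%N ->
  theta (-1 - y) d k = theta y d (d - k).
Proof. by move=> two kd; rewrite /theta /half_d natrB //; field. Qed.
End Theta.

Section RowBasis.
Variables (F : fieldType) (d : nat).
Local Notation n := d.+1.

Definition erow k : 'rV[F]_n := \row_(j < n) ((j : nat) == k)%:R.

Definition ubidiag (tau ph : nat -> F) : 'M[F]_n :=
  \matrix_(i, j) (if i == j then tau (j : nat)
                  else if (i : nat).+1 == (j : nat) then ph (j : nat) else 0).

Lemma erow_ge k : (n <= k)%N -> erow k = 0.
Proof.
move=> nk; apply/rowP => j; rewrite !mxE; case: eqP => // ej.
by move: (ltn_ord j); rewrite ej ltnNge nk.
Qed.

Lemma erow_mul k (hk : (k < n)%N) (M : 'M[F]_n) : erow k *m M = row (Ordinal hk) M.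
Proof. by rewrite rowE; congr (_ *m _); apply/rowP => j; rewrite !mxE. Qed.

Lemma row_erow (i : 'I_n) (M : 'M[F]_n) : row i M = erow i *m M.
Proof. by rewrite (erow_mul (ltn_ord i)); congr row; apply: val_inj. Qed.

Lemma erow_RdA x k : erow k *m (RdA x d)^T = theta x d k *: erow k + erow k.+1.
Proof.
case: (ltnP k n) => hk; last by rewrite !erow_ge ?mul0mx ?scaler0 ?addr0 //; exact: leqW.
rewrite erow_mul; apply/rowP => j; rewrite !mxE.
have -> : (j == Ordinal hk) = ((j : nat) == k) by [].
case: (eqVneq (j : nat) k) => [->|ne] /=.
  by rewrite (ltn_eqF (ltnSn k)) mulr1 addr0.
by rewrite mulr0 add0r; case: (_ == _).
Qed.

Lemma erow_ubidiag tau ph k : ph 0%N = 0 -> ph n = 0 ->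
  erow k *m (ubidiag tau ph)^T = tau k *: erow k + ph k *: erow k.-1.
Proof.
move=> p0 pn.
case: (ltnP k n) => hk; last first.
  rewrite erow_ge // mul0mx scaler0 add0r.
  move: hk; rewrite leq_eqVlt => /orP[/eqP <-|hk]; first by rewrite pn scale0r.
  by rewrite erow_ge ?scaler0 //; case: k hk => // k; rewrite ltnS.
rewrite erow_mul; apply/rowP => j; rewrite !mxE.
have -> : (j == Ordinal hk) = ((j : nat) == k) by [].
case: (eqVneq (j : nat) k) => [->|ne] /=.
  rewrite mulr1; case: k hk => [|k] hk /=; first by rewrite p0 mul0r addr0.
  by rewrite (gtn_eqF (ltnSn k)) mulr0 addr0.
rewrite mulr0 add0r; case: k hk ne => [|k] hk ne /=; first by rewrite p0 mul0r.
by rewrite eqSS; case: (eqVneq (j : nat) k) => _; rewrite ?mulr1 ?mulr0.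
Qed.

End RowBasis.
Arguments erow {F d}.
Arguments ubidiag {F d}.

Section BidiagonalBasis.
Variables (F : fieldType) (d : nat).
Local Notation n := d.+1.
Variables (a b : 'M[F]_n) (dl ka kb : F).
Hypothesis two : (2 : F) != 0.
Hypothesis awab : aw_rel a b dl ka.
Hypothesis awba : aw_rel b a dl kb.
Hypothesis irr : pair_irreducible a b.
Variables (ya yb : F) (u0 v0 : 'rV[F]_n).
Hypothesis u0_neq0 : u0 != 0.
Hypothesis u0_eigen : u0 *m a = th ya *: u0.
Hypothesis a_gap : ~~ eigenvalue a (th (ya + 1)).
Hypothesis v0_neq0 : v0 != 0.
Hypothesis v0_eigen : v0 *m b = th yb *: v0.
Hypothesis b_gap : ~~ eigenvalue b (th (yb + 1)).

(* The flag u only serves to show that v, whose steps use the eigenvalues of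
   u in reverse order, stops after n steps; its last vector v_d is then an
   a-eigenvector, from which the flag w is built. *)
Local Notation x := (-1 - (ya - half_d F d)).
Local Notation y := (yb - half_d F d).
Local Notation tauU := (theta (ya - half_d F d) d).
Local Notation kapV := (theta x d).
Local Notation tauV := (theta y d).
Local Notation kapW := (theta (-1 - y) d).
Local Notation u := (kseq b (fun=> 0) u0).
Local Notation v := (kseq a kapV v0).
Local Notation w := (kseq b kapW (v d)).

Let irrba := pair_irreducibleC irr.

Let u0_eigenU : u0 *m a = tauU 0 *: u0.
Proof. by rewrite theta_shift subr0. Qed.

Let v0_eigenV : v0 *m b = tauV 0 *: v0.
Proof. by rewrite theta_shift subr0. Qed.

Let u1_trig : exists c, u 1 *m a - tauU 1 *: u 1 = c *: u0.
Proof.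
have [c hc] := aw_lowering_step 0 awab u0_neq0 u0_eigen a_gap.
by exists c; rewrite theta_shift -hc.
Qed.

Let v1_trig : exists c, v 1 *m b - tauV 1 *: v 1 = c *: v0.
Proof.
have [c hc] := aw_lowering_step (kapV 0) awba v0_neq0 v0_eigen b_gap.
by exists c; rewrite theta_shift -hc.
Qed.

Let kapV_tauU k : (k <= d)%N -> kapV k = tauU (d - k).
Proof. exact: theta_reflect. Qed.

Let kapW_tauV k : (k <= d)%N -> kapW k = tauV (d - k).
Proof. exact: theta_reflect. Qed.

Lemma kseq_end : v n = 0.
Proof.
apply/eqP; rewrite -submx0.
have := kseq_descend awba (theta_rec _ _) u0_eigenU u1_trig irrba u0_neq0 v0 kapV_tauU
  (leqnn n).
by rewrite subnn kspan0.
Qed.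

Let w0_neq0 : v d != 0.
Proof.
apply: contraNneq (kseq_notin_kspan awab (theta_rec _ _) v0_eigenV v1_trig irr v0_neq0
  (ltnSn d)) => ->.
exact: sub0mx.
Qed.

Let w0_eigenU : v d *m a = tauU 0 *: v d.
Proof.
by move/eqP: kseq_end => /=; rewrite subr_eq0 => /eqP ->; rewrite kapV_tauU // subnn.
Qed.

Let w1_trig : exists c, w 1 *m a - tauU 1 *: w 1 = c *: v d.
Proof.
have w0_eigen : v d *m a = th ya *: v d by rewrite w0_eigenU theta_shift subr0.
have [c hc] := aw_lowering_step (kapW 0) awab w0_neq0 w0_eigen a_gap.
by exists c; rewrite theta_shift -hc.
Qed.

Lemma kseq_ubidiag : exists ph : nat -> F,
  [/\ ph 0%N = 0, ph n = 0 &
      forall i, (i < n)%N -> v i *m b = tauV i *: v i + ph i *: v i.-1].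
Proof.
have /fin_all_exists[l hl] : forall i : 'I_n, exists l : F, l != 0 /\ w (d - i) = l *: v i.
  move=> i; have [l l0 hl] := kseq_opposite awab awba irr (theta_rec _ _) (theta_rec _ _)
    v0_eigenV v1_trig w0_eigenU w1_trig v0_neq0 w0_neq0 kapW_tauV kapV_tauU (ltn_ord i).
  by exists l.
pose l' i := l (inord i).
have hl' i : (i < n)%N -> l' i != 0 /\ w (d - i) = l' i *: v i.
  by move=> hi; have := hl (inord i); rewrite /l' inordK.
exists (fun i => if (0 < i < n)%N then l' i.-1 / l' i else 0); split => //=.
  by rewrite ltnn.
case=> [_|i hi]; first by rewrite scale0r addr0 theta_shift subr0.
rewrite hi /=; have [l1nz e1] := hl' _ hi; have [_ e0] := hl' _ (ltnW hi).
have ew : w (d - i.+1) *m b = tauV i.+1 *: w (d - i.+1) + w (d - i).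
  rewrite kseqS kapW_tauV; last lia.
  have -> : (d - (d - i.+1) = i.+1)%N by lia.
  by have -> : (d - i.+1).+1 = (d - i)%N by lia.
move: ew; rewrite e1 e0 -scalemxAl => ew.
apply: (scalerI l1nz); rewrite ew; apply/rowP => j; rewrite !mxE; by field.
Qed.

Lemma bidiagonal_basis_of_eigen : exists ph : nat -> F, exists2 Q : 'M[F]_n, Q \in unitmx &
  [/\ ph 0%N = 0, ph n = 0, Q *m a = (RdA x d)^T *m Q & Q *m b = (ubidiag tauV ph)^T *m Q].
Proof.
have [ph [ph0 phn vb]] := kseq_ubidiag.
set Q := kspan a kapV v0 n.
have erowQ k : (k <= n)%N -> erow k *m Q = v k.
  rewrite leq_eqVlt => /orP[/eqP ->|hk]; first by rewrite erow_ge // mul0mx kseq_end.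
  by rewrite (erow_mul hk) row_kspan hk.
exists ph, Q; last split => //.
- by rewrite -row_full_unit /row_full (rank_kspan awab (theta_rec _ _) v0_eigenV v1_trig irr
    v0_neq0 (leqnn n)).
- apply/row_matrixP => i; rewrite !row_mul !row_erow erow_RdA mulmxDl -scalemxAl.
  by rewrite !erowQ ?kseqS // ltnW.
- apply/row_matrixP => i; rewrite !row_mul !row_erow (erow_ubidiag _ _ ph0 phn) mulmxDl.
  rewrite -!scalemxAl !erowQ ?vb //; last exact: ltnW.
  by apply: leq_trans (leq_pred _) (ltnW (ltn_ord i)).
Qed.
End BidiagonalBasis.

Lemma bidiagonal_basis (F : closedFieldType) (d : nat) (a b : 'M[F]_d.+1) (dl ka kb : F) :
  [pchar F] =i pred0 -> aw_rel a b dl ka -> aw_rel b a dl kb -> pair_irreducible a b ->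
  exists x y : F, exists ph : nat -> F, exists2 Q : 'M[F]_d.+1, Q \in unitmx &
    [/\ ph 0%N = 0, ph d.+1 = 0, Q *m a = (RdA x d)^T *m Q
       & Q *m b = (ubidiag (theta y d) ph)^T *m Q].
Proof.
move=> charF0 awab awba irr.
have two : (2 : F) != 0 by rewrite ((pcharf0P F).1 charF0 2).
have [ya [u0 u0_neq0 [u0_eigen a_gap]]] := exists_extremal_eigen a charF0 (ltn0Sn d).
have [yb [v0 v0_neq0 [v0_eigen b_gap]]] := exists_extremal_eigen b charF0 (ltn0Sn d).
have [ph [Q Qu basis]] := bidiagonal_basis_of_eigen two awab awba irr u0_neq0 u0_eigen a_gap
  v0_neq0 v0_eigen b_gap.
by exists (-1 - (ya - half_d F d)), (yb - half_d F d), ph, Q.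
Qed.

Section AWEntries.
Variables (F : fieldType) (n : nat) (K T : 'M[F]_n) (dl k : F).

Lemma aw_rel_entry (g0 g1 g2 p0 : 'rV[F]_n) (j : 'I_n)
    (t0 t1 m0 m1 m2 ph0 ph1 ph2 k' c0 c1 c2 cp : F) :
  aw_rel K T dl k ->
  g0 *m K = t0 *: g0 + g1 -> g1 *m K = t1 *: g1 + g2 ->
  g0 *m T = m0 *: g0 + p0 -> g1 *m T = m1 *: g1 + ph1 *: g0 ->
  g2 *m T = m2 *: g2 + ph2 *: g1 -> p0 *m K = k' *: p0 + ph0 *: g0 ->
  g0 0 j = c0 -> g1 0 j = c1 -> g2 0 j = c2 -> p0 0 j = cp ->
  (t0 * t0 * (m0 * c0 + cp) + (t0 + t1) * (m1 * c1 + ph1 * c0) + (m2 * c2 + ph2 * c1))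
  - 2 * (t0 * m0 * (t0 * c0 + c1) + t0 * (k' * cp + ph0 * c0) + m1 * (t1 * c1 + c2)
         + ph1 * (t0 * c0 + c1))
  + (m0 * (t0 * t0 * c0 + (t0 + t1) * c1 + c2) + k' * (k' * cp + ph0 * c0)
     + ph0 * (t0 * c0 + c1))
  = 2 * ((t0 * t0 * c0 + (t0 + t1) * c1 + c2) + (t0 * (m0 * c0 + cp) + m1 * c1 + ph1 * c0)
       + (m0 * (t0 * c0 + c1) + k' * cp + ph0 * c0) - dl * (t0 * c0 + c1) + k * c0).
Proof.
move=> awKT e1 e2 e3 e4 e5 e6 h0 h1 h2 hp.
have := congr1 (mulmx g0) awKT.
rewrite !mulmxDr !mulmxN !mulmxA -!scalemxAr !mulmxDr !mulmxN !mulmxA -!scalemxAr.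
rewrite mul_mx_scalar ?(e1, e2, e3, e4, e5, e6, mulmxDl, =^~scalemxAl, scalerDr, scalerA).
move=> H; have := congr1 (fun M : 'rV_n => M 0 j) H; rewrite !mxE h0 h1 h2 hp => {}H.
by apply: (eq_of_subr H); ring.
Qed.

Lemma aw_rel_entry_eigen (g0 g1 : 'rV[F]_n) (j : 'I_n) (t0 m0 m1 ph1 c0 c1 : F) :
  aw_rel T K dl k ->
  g0 *m T = m0 *: g0 -> g0 *m K = t0 *: g0 + g1 -> g1 *m T = m1 *: g1 + ph1 *: g0 ->
  g0 0 j = c0 -> g1 0 j = c1 ->
  m0 * m0 * (t0 * c0 + c1) - 2 * (m0 * (t0 * m0 * c0 + m1 * c1 + ph1 * c0))
  + (t0 * m0 * m0 * c0 + m1 * (m1 * c1 + ph1 * c0) + ph1 * m0 * c0)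
  = 2 * (m0 * m0 * c0 + m0 * (t0 * c0 + c1) + (t0 * m0 * c0 + m1 * c1 + ph1 * c0)
         - dl * (m0 * c0) + k * c0).
Proof.
move=> awTK e1 e2 e3 h0 h1.
have := congr1 (mulmx g0) awTK.
rewrite !mulmxDr !mulmxN !mulmxA -!scalemxAr !mulmxDr !mulmxN !mulmxA -!scalemxAr.
rewrite mul_mx_scalar ?(e1, e2, e3, mulmxDl, =^~scalemxAl, scalerDr, scalerA).
move=> H; have := congr1 (fun M : 'rV_n => M 0 j) H; rewrite !mxE h0 h1 => {}H.
by apply: (eq_of_subr H); ring.
Qed.
End AWEntries.

Section BidiagonalAW.
Variables (F : fieldType) (d : nat) (x : F) (tau ph : nat -> F) (dl k1 k2 : F).
Local Notation n := d.+1.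
Local Notation kap := (theta x d).
Local Notation A := (RdA x d)^T.
Local Notation B := (ubidiag tau ph)^T.
Local Notation e := (@erow F d).
Hypotheses (ph0 : ph 0%N = 0) (phn : ph n = 0).

Let erowA (k : nat) : e k *m A = kap k *: e k + e k.+1.
Proof. exact: erow_RdA. Qed.
Let erowB (k : nat) : e k *m B = tau k *: e k + ph k *: e k.-1.
Proof. exact: erow_ubidiag. Qed.

Lemma ubidiag_aw_rec : aw_rel A B dl k1 -> forall i, (i < d)%N ->
  ph i - 2 * ph i.+1 + ph i.+2
  = 2 * (kap i + kap i.+1 + tau i + tau i.+1 - dl) + (kap i - kap i.+1) * (tau i - tau i.+1).
Proof.
move=> awAB i hi; have hj : (i.+1 < n)%N by lia.
have e6 : (ph i *: e i.-1) *m A = kap i.-1 *: (ph i *: e i.-1) + ph i *: e i.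
  case: i hi hj => [|i] hi hj; first by rewrite ph0 !scale0r mul0mx scaler0 add0r.
  by rewrite -scalemxAl erowA scalerDr !scalerA mulrC.
have := aw_rel_entry (j := Ordinal hj) awAB (erowA i) (erowA i.+1) (erowB i) (erowB i.+1)
  (erowB i.+2) e6 (erefl _) (erefl _) (erefl _) (erefl _).
rewrite !mxE /= !eqxx (gtn_eqF (ltnSn i)) (ltn_eqF (ltnSn i.+1)).
have -> : (i.+1 == i.-1)%N = false by case: i {hi hj e6} => // i; rewrite gtn_eqF // ltnW.
rewrite ?mulr0n ?mulr1n => H; apply: (eq_of_subr H); ring.
Qed.

Lemma ubidiag_aw_init : aw_rel A B dl k1 ->
  (kap 1 - kap 0) * ph 1 = 2 * (kap 0 * kap 0 + 2 * kap 0 * tau 0 + ph 1 - dl * kap 0 + k1).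
Proof.
move=> awAB.
have e6 : (ph 0 *: e 0.-1) *m A = kap 0.-1 *: (ph 0 *: e 0.-1) + ph 0 *: e 0.
  by rewrite ph0 !scale0r mul0mx scaler0 add0r.
have := aw_rel_entry (j := Ordinal (ltn0Sn d)) awAB (erowA 0) (erowA 1) (erowB 0) (erowB 1)
  (erowB 2) e6 (erefl _) (erefl _) (erefl _) (erefl _).
by rewrite !mxE /= ph0 ?mulr0n ?mulr1n => H; apply: (eq_of_subr H); ring.
Qed.

Lemma ubidiag_aw_init_dual : aw_rel B A dl k2 ->
  (tau 1 - tau 0) * ph 1 = 2 * (tau 0 * tau 0 + 2 * kap 0 * tau 0 + ph 1 - dl * tau 0 + k2).
Proof.
move=> awBA.
have erowB0 : e 0 *m B = tau 0 *: e 0 by rewrite erowB ph0 scale0r addr0.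
have := aw_rel_entry_eigen (j := Ordinal (ltn0Sn d)) awBA erowB0 (erowA 0) (erowB 1)
  (erefl _) (erefl _).
by rewrite !mxE /= ?mulr0n ?mulr1n => H; apply: (eq_of_subr H); ring.
Qed.
End BidiagonalAW.

Section PhiIdentities.
Variables (F : fieldType) (a b c : F) (d : nat).
Hypothesis two : (2 : F) != 0.

Lemma phi_rec i :
  phi a b c d i - 2 * phi a b c d i.+1 + phi a b c d i.+2
  = 2 * (theta a d i + theta a d i.+1 + theta b d i + theta b d i.+1 - delta_scal a b c d)
    + (theta a d i - theta a d i.+1) * (theta b d i - theta b d i.+1).
Proof. by rewrite /phi /theta /delta_scal /half_d -!natr1; field. Qed.

Lemma phi_init_alpha :
  (theta a d 1 - theta a d 0) * phi a b c d 1
  = 2 * (theta a d 0 * theta a d 0 + 2 * theta a d 0 * theta b d 0 + phi a b c d 1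
         - delta_scal a b c d * theta a d 0 + alpha_scal a b c d).
Proof. by rewrite /phi /theta /delta_scal /alpha_scal /half_d; field. Qed.

Lemma phi_init_beta :
  (theta b d 1 - theta b d 0) * phi a b c d 1
  = 2 * (theta b d 0 * theta b d 0 + 2 * theta a d 0 * theta b d 0 + phi a b c d 1
         - delta_scal a b c d * theta b d 0 - beta_scal a b c d).
Proof. by rewrite /phi /theta /delta_scal /beta_scal /half_d; field. Qed.
End PhiIdentities.

Lemma second_diff_eq0 (F : fieldType) (h : nat -> F) (D : nat) :
  [pchar F] =i pred0 -> h 0%N = 0 -> h D.+1 = 0 ->
  (forall i, (i < D)%N -> h i - 2 * h i.+1 + h i.+2 = 0) ->
  forall i, (i <= D.+1)%N -> h i = 0.
Proof.
move=> charF0 h0 hD hrec.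
have lin i : (i <= D.+1)%N -> h i = i%:R * h 1%N.
  elim: i {-2}i (leqnn i) => [|m IH] i.
    by rewrite leqn0 => /eqP -> _; rewrite h0 mul0r.
  rewrite leq_eqVlt => /orP[/eqP ->|]; last by rewrite ltnS; exact: IH.
  case: m IH => [|m] IH hm; first by rewrite mul1r.
  have e : h m - 2 * h m.+1 + h m.+2 = 0 by apply: hrec; lia.
  have -> : h m.+2 = 2 * h m.+1 - h m by apply/eqP; rewrite -subr_eq0 -e; apply/eqP; ring.
  rewrite (IH m.+1) // ?(IH m) //; try lia.
  by rewrite -!natr1; ring.
have h1 : h 1%N = 0.
  have := lin D.+1 (leqnn _); rewrite hD => /esym /eqP; rewrite mulf_eq0 => /orP[|/eqP //].
  by rewrite ((pcharf0P F).1 charF0 D.+1).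
by move=> i hi; rewrite lin // h1 mulr0.
Qed.

(* The superdiagonal satisfies a second-order recurrence with zero boundary
   values; c is any root of the quadratic equation that fixes delta. *)
Lemma leonard_params (F : closedFieldType) (d : nat) (x y : F) (ph : nat -> F)
    (dl k1 k2 : F) :
  [pchar F] =i pred0 -> ph 0%N = 0 -> ph d.+1 = 0 ->
  aw_rel (RdA x d)^T (ubidiag (theta y d) ph)^T dl k1 ->
  aw_rel (ubidiag (theta y d) ph)^T (RdA x d)^T dl k2 ->
  exists c : F, [/\ dl = delta_scal x y c d, k1 = alpha_scal x y c d,
                   k2 = - beta_scal x y c d & RdB x y c d = ubidiag (theta y d) ph].
Proof.
move=> charF0 ph0 phn awAB awBA.
have two : (2 : F) != 0 by rewrite ((pcharf0P F).1 charF0 2).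
set K0 := dl - (half_d F d * (half_d F d + 1) + x * (x + 1) + y * (y + 1)).
have [c hc] : exists c, root ('X^2 + 'X - K0%:P) c.
  apply/closed_rootP; rewrite size_polyDl ?size_polyDl ?size_polyXn ?size_polyX //.
  by rewrite size_polyN size_polyC; case: (K0 == 0).
have hdl : dl = delta_scal x y c d.
  move: hc; rewrite /root !hornerE /delta_scal => /eqP hc.
  by apply: (eq_of_subr (esym hc)); rewrite /K0; ring.
have phE k : (k <= d.+1)%N -> ph k = phi x y c d k.
  move=> hk; apply/eqP; rewrite -subr_eq0; apply/eqP.
  apply: (second_diff_eq0 (h := fun k => ph k - phi x y c d k) (D := d) charF0) => //.
  - by rewrite ph0 /phi mul0r !mul0r subr0.
  - by rewrite phn /phi -natr1; apply/eqP; rewrite subr_eq0; apply/eqP; ring.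
  - move=> i hi; have := ubidiag_aw_rec ph0 phn awAB hi; have := phi_rec x y c d two i.
    rewrite -hdl => e1 e2.
    by apply: (eq_of_lincomb e2 e1 (k1 := 1) (k2 := -1)); ring.
have ph1 : ph 1%N = phi x y c d 1 by apply: phE.
exists c; split => //.
- apply: (mulfI two); have := ubidiag_aw_init ph0 phn awAB; have := phi_init_alpha x y c d two.
  rewrite ph1 -hdl => e1 e2.
  by apply: (eq_of_lincomb e2 e1 (k1 := -1) (k2 := 1)); ring.
- apply: (mulfI two); have := ubidiag_aw_init_dual ph0 phn awBA.
  have := phi_init_beta x y c d two.
  rewrite ph1 -hdl => e1 e2.
  by apply: (eq_of_lincomb e2 e1 (k1 := -1) (k2 := 1)); ring.
- apply/matrixP => i j; rewrite !mxE; case: ifP => // _; case: ifP => // _.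
  by rewrite phE // ltnW.
Qed.

Section BasisChange.
Variables (F : fieldType) (n : nat) (P : 'M[F]_n).
Hypothesis P_unit : P \in unitmx.

Definition mxconj (X : 'M[F]_n) := invmx P *m X *m P.

Lemma mxconjM X Y : mxconj (X *m Y) = mxconj X *m mxconj Y.
Proof. by rewrite /mxconj !mulmxA mulmxK. Qed.
Lemma mxconjD X Y : mxconj (X + Y) = mxconj X + mxconj Y.
Proof. by rewrite /mxconj mulmxDr mulmxDl. Qed.
Lemma mxconjN X : mxconj (- X) = - mxconj X.
Proof. by rewrite /mxconj mulmxN mulNmx. Qed.
Lemma mxconjB X Y : mxconj (X - Y) = mxconj X - mxconj Y.
Proof. by rewrite mxconjD mxconjN. Qed.
Lemma mxconjZ (k : F) X : mxconj (k *: X) = k *: mxconj X.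
Proof. by rewrite /mxconj -scalemxAr -scalemxAl. Qed.
Lemma mxconjMn X k : mxconj (X *+ k) = mxconj X *+ k.
Proof. by rewrite -!scaler_nat mxconjZ. Qed.
Lemma mxconj_scalar (k : F) : mxconj k%:M = k%:M.
Proof. by rewrite /mxconj mul_mx_scalar -scalemxAl mulVmx // scalemx1. Qed.

Definition conj_rep (V : racah_rep F n) :=
  RacahRep (mxconj (rA V)) (mxconj (rB V)) (mxconj (rC V)) (mxconj (rD V)).

Lemma mxconj_comm X Y : comm (mxconj X) (mxconj Y) = mxconj (comm X Y).
Proof. by rewrite /comm mxconjB !mxconjM. Qed.

Lemma conj_rep_alpha V : ralpha (conj_rep V) = mxconj (ralpha V).
Proof. by rewrite /ralpha /comm /= !(mxconjB, mxconjD, mxconjN, mxconjM). Qed.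
Lemma conj_rep_beta V : rbeta (conj_rep V) = mxconj (rbeta V).
Proof. by rewrite /rbeta /comm /= !(mxconjB, mxconjD, mxconjN, mxconjM). Qed.
Lemma conj_rep_gamma V : rgamma (conj_rep V) = mxconj (rgamma V).
Proof. by rewrite /rgamma /comm /= !(mxconjB, mxconjD, mxconjN, mxconjM). Qed.
Lemma conj_rep_delta V : rdelta (conj_rep V) = mxconj (rdelta V).
Proof. by rewrite /rdelta /= !mxconjD. Qed.

Lemma commutes_gens_conj V X : commutes_gens V X -> commutes_gens (conj_rep V) (mxconj X).
Proof. by case=> h1 h2 h3 h4; split; rewrite /= -!mxconjM ?h1 ?h2 ?h3 ?h4. Qed.

Lemma is_racah_module_conj V : is_racah_module V -> is_racah_module (conj_rep V).
Proof.
case=> [[e1 e2 e3] [c1 c2 c3]].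
split; first by split; rewrite /= mxconj_comm ?e1 ?e2 ?e3 mxconjMn.
by split; rewrite ?conj_rep_alpha ?conj_rep_beta ?conj_rep_gamma; apply: commutes_gens_conj.
Qed.

Lemma conj_rep_iso V : racah_iso (conj_rep V) V.
Proof. by exists P => //; split; rewrite /= /mxconj !mulmxA mulmxV // mul1mx. Qed.
End BasisChange.

Lemma mxconj_intertwine (F : fieldType) n (Q X Y : 'M[F]_n) :
  Q \in unitmx -> Q *m X = Y *m Q -> mxconj (invmx Q) X = Y.
Proof. by move=> Qu QX; rewrite /mxconj invmxK QX mulmxK. Qed.

Lemma mxconj_tr_intertwine (F : fieldType) n (Q X Y : 'M[F]_n) :
  Q \in unitmx -> Q *m X^T = Y^T *m Q -> mxconj Q^T X = Y.
Proof.
move=> Qu QX; have Qtu : Q^T \in unitmx by rewrite unitmx_tr.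
have XQ : X *m Q^T = Q^T *m Y by rewrite -[X]trmxK -trmx_mul QX trmx_mul trmxK.
by rewrite /mxconj -mulmxA XQ mulmxA mulVmx // mul1mx.
Qed.

Lemma aw_rel_intertwine (F : fieldType) n (Q K T K' T' : 'M[F]_n) (dl k : F) :
  Q \in unitmx -> Q *m K = K' *m Q -> Q *m T = T' *m Q ->
  aw_rel K T dl k -> aw_rel K' T' dl k.
Proof.
move=> Qu QK QT awKT; have Qiu : invmx Q \in unitmx by rewrite unitmx_inv.
have := congr1 (mxconj (invmx Q)) awKT.
by rewrite !(mxconjD, mxconjN, mxconjZ, mxconjM Qiu, mxconj_scalar Qiu)
  (mxconj_intertwine Qu QK) (mxconj_intertwine Qu QT).
Qed.

Lemma eq_of_lincomb3 (R : comNzRingType) (x y l1 r1 l2 r2 l3 r3 k1 k2 k3 : R) :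
  l1 = r1 -> l2 = r2 -> l3 = r3 ->
  x - y = k1 * (l1 - r1) + k2 * (l2 - r2) + k3 * (l3 - r3) -> x = y.
Proof. by move=> -> -> -> /eqP; rewrite !subrr !mulr0 !addr0 subr_eq0 => /eqP. Qed.

Section Schur.
Variables (F : closedFieldType) (n : nat) (As : seq 'M[F]_n).
Hypothesis n_gt0 : (0 < n)%N.
Hypothesis irr : forall S : 'M[F]_n, all (fun X => S *m X <= S)%MS As ->
  \rank S = 0%N \/ \rank S = n.

Lemma schur_scalar (M : 'M[F]_n) : all (fun X => M *m X == X *m M) As -> exists l, M = l%:M.
Proof.
move=> /allP cM.
have [l] : exists l, root (char_poly M) l.
  by apply/closed_rootP; rewrite size_char_poly eqSS -lt0n.
rewrite -eigenvalue_root_char /eigenvalue /eigenspace => nz.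
set E := kermx (M - l%:M) in nz.
have inv : all (fun X => E *m X <= E)%MS As.
  apply/allP => X /cM /eqP cX; apply/sub_kermxP.
  have e : X *m (M - l%:M) = (M - l%:M) *m X.
    by rewrite mulmxBr mulmxBl mul_mx_scalar mul_scalar_mx cX.
  by rewrite -mulmxA e mulmxA mulmx_ker mul0mx.
case: (irr inv) => [/eqP|hr]; first by rewrite mxrank_eq0 (negbTE nz).
exists l; apply/eqP; rewrite -subr_eq0 -mxrank_eq0.
move: hr; rewrite /E mxrank_ker => h.
move: (rank_leq_row (M - l%:M)) => hle; apply/eqP; change (\rank (M - l%:M) = 0%N); lia.
Qed.
End Schur.

Section RowForm.
Variables (F : fieldType) (n : nat) (V : racah_rep F n).
Local Notation a := (rA V)^T.
Local Notation b := (rB V)^T.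
Local Notation c := (rC V)^T.
Local Notation dd := (rD V)^T.

Lemma racah_irreducible_rows : racah_irreducible V ->
  forall S : 'M[F]_n, all (fun X => S *m X <= S)%MS [:: a; b; c; dd] ->
  \rank S = 0%N \/ \rank S = n.
Proof.
case=> _ irr S /and5P[hA hB hC hD _]; rewrite -mxrank_tr; apply: irr.
by rewrite !trmx_mul !trmxK.
Qed.

Lemma commutes_gens_rows M : commutes_gens V M ->
  all (fun X => M^T *m X == X *m M^T) [:: a; b; c; dd].
Proof. by case=> hA hB hC hD; rewrite /= -!trmx_mul hA hB hC hD !eqxx. Qed.

Lemma rdelta_central : (2 : F) != 0 -> is_racah_module V -> commutes_gens V (rdelta V).
Proof.
move=> two [[eAB eBC eCA] _].
have commDl (X Y Z : 'M[F]_n) : comm (X + Y) Z = comm X Z + comm Y Z.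
  by rewrite /comm mulmxDl mulmxDr opprD addrACA.
have commC (X Y : 'M[F]_n) : comm Y X = - comm X Y by rewrite /comm opprB.
have commxx (X : 'M[F]_n) : comm X X = 0 by rewrite /comm subrr.
have comm0 (X Y : 'M[F]_n) : comm X Y = 0 -> X *m Y = Y *m X.
  by move/eqP; rewrite subr_eq0 => /eqP.
have hA : rdelta V *m rA V = rA V *m rdelta V.
  by apply: comm0; rewrite !commDl commxx (commC (rA V)) eAB eCA add0r addNr.
have hB : rdelta V *m rB V = rB V *m rdelta V.
  by apply: comm0; rewrite !commDl commxx eAB (commC (rB V)) eBC addr0 subrr.
have hC : rdelta V *m rC V = rC V *m rdelta V.
  by apply: comm0; rewrite !commDl commxx (commC (rC V)) eCA eBC addr0 addNr.
have hAB : rdelta V *m comm (rA V) (rB V) = comm (rA V) (rB V) *m rdelta V.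
  have eAB' : rdelta V *m (rA V *m rB V) = rA V *m rB V *m rdelta V.
    by rewrite mulmxA hA -mulmxA hB mulmxA.
  have eBA' : rdelta V *m (rB V *m rA V) = rB V *m rA V *m rdelta V.
    by rewrite mulmxA hB -mulmxA hA mulmxA.
  by rewrite /comm mulmxBr mulmxBl eAB' eBA'.
split => //; apply: (scalerI two).
by rewrite scalemxAr scalemxAl !scaler_nat -eAB.
Qed.

Lemma row_commAB : is_racah_module V -> b *m a - a *m b = dd *+ 2.
Proof.
case=> [[eAB _ _] _].
by have := congr1 trmx eAB; rewrite /comm raddfB /= !trmx_mul raddfMn.
Qed.

Lemma row_ralpha al : ralpha V = al%:M -> dd *m a - a *m dd + c *m a - a *m b = al%:M.
Proof.
by move/(congr1 trmx); rewrite /ralpha /comm !raddfD !raddfN /= !trmx_mul tr_scalar_mx.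
Qed.

Lemma row_rbeta be : rbeta V = be%:M -> dd *m b - b *m dd + a *m b - b *m c = be%:M.
Proof.
by move/(congr1 trmx); rewrite /rbeta /comm !raddfD !raddfN /= !trmx_mul tr_scalar_mx.
Qed.

Lemma row_rdelta de : rdelta V = de%:M -> c = de%:M - a - b.
Proof.
move/(congr1 trmx); rewrite /rdelta !raddfD /= tr_scalar_mx => hde.
apply/matrixP => i j; have := congr1 (fun M : 'M_n => M i j) hde; rewrite !mxE => h.
by rewrite -h; ring.
Qed.

(* The commutator relation, multiplied by A on either side, eliminates D from
   the alpha relation. *)
Lemma racah_aw_relA al de : is_racah_module V -> ralpha V = al%:M -> rdelta V = de%:M ->
  aw_rel a b de al.
Proof.
move=> HV /row_ralpha hal /row_rdelta ec; have hc1 := row_commAB HV.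
have h1 := congr1 (mulmx a) hc1; have h2 := congr1 (mulmx^~ a) hc1.
move: hal; rewrite ec.
rewrite !mulmxBr !mulmxA mulr2n mulmxDr in h1.
rewrite !mulmxBl mulr2n mulmxDl in h2.
rewrite !mulmxBl !mul_scalar_mx => h3; rewrite /aw_rel.
move: (a *m a *m b) (a *m b *m a) (b *m a *m a) (a *m dd) (dd *m a) (a *m a) (a *m b)
  (b *m a) h1 h2 h3 => X1 X2 X3 Y1 Y2 Z1 Z2 Z3 h1 h2 h3.
apply/matrixP => i j.
move: (congr1 (fun M : 'M_n => M i j) h1) (congr1 (fun M : 'M_n => M i j) h2)
      (congr1 (fun M : 'M_n => M i j) h3); rewrite !mxE => {}h1 {}h2 {}h3.
by apply: (eq_of_lincomb3 h1 h2 h3 (k1 := -1) (k2 := 1) (k3 := 2)); ring.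
Qed.

Lemma racah_aw_relB be de : is_racah_module V -> rbeta V = be%:M -> rdelta V = de%:M ->
  aw_rel b a de (- be).
Proof.
move=> HV /row_rbeta hbe /row_rdelta ec; have hc1 := row_commAB HV.
have h1 := congr1 (mulmx b) hc1; have h2 := congr1 (mulmx^~ b) hc1.
move: hbe; rewrite ec.
rewrite !mulmxBr !mulmxA mulr2n mulmxDr in h1.
rewrite !mulmxBl mulr2n mulmxDl in h2.
rewrite !mulmxBr !mul_mx_scalar => h3; rewrite /aw_rel.
move: (b *m b *m a) (b *m a *m b) (a *m b *m b) (b *m dd) (dd *m b) (b *m b) (a *m b)
  (b *m a) h1 h2 h3 => X1 X2 X3 Y1 Y2 Z1 Z2 Z3 h1 h2 h3.
apply/matrixP => i j.
move: (congr1 (fun M : 'M_n => M i j) h1) (congr1 (fun M : 'M_n => M i j) h2)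
      (congr1 (fun M : 'M_n => M i j) h3); rewrite !mxE => {}h1 {}h2 {}h3.
by apply: (eq_of_lincomb3 h1 h2 h3 (k1 := 1) (k2 := -1) (k3 := -2)); ring.
Qed.

(* C and D lie in the algebra generated by A and B once delta is scalar. *)
Lemma racah_pair_irreducible de : (2 : F) != 0 -> is_racah_module V ->
  racah_irreducible V -> rdelta V = de%:M -> pair_irreducible a b.
Proof.
move=> two HV irr /row_rdelta ec S Sa Sb; apply: (racah_irreducible_rows irr).
have edd : dd = 2^-1 *: (b *m a - a *m b).
  by rewrite (row_commAB HV) -scaler_nat scalerA mulVf // scale1r.
rewrite /= Sa Sb ec edd !mulmxBr mul_mx_scalar -scalemxAr mulmxBr !mulmxA /= andbT.
apply/andP; split.
  apply: addmx_sub; first apply: addmx_sub.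
  - exact: scalemx_sub (submx_refl S).
  - by rewrite -scaleN1r; apply: scalemx_sub.
  - by rewrite -scaleN1r; apply: scalemx_sub.
apply: scalemx_sub; apply: addmx_sub; first exact: submx_trans (submxMr a Sb) Sa.
by rewrite -scaleN1r; apply: scalemx_sub; exact: submx_trans (submxMr b Sa) Sb.
Qed.
End RowForm.

Lemma racah_central_scalar (F : closedFieldType) n (V : racah_rep F n) (M : 'M[F]_n) :
  racah_irreducible V -> commutes_gens V M -> exists l, M = l%:M.
Proof.
move=> irr cM; have [n0 _] := irr.
have [l hl] := schur_scalar n0 (racah_irreducible_rows irr) (commutes_gens_rows cM).
by exists l; rewrite -[M]trmxK hl tr_scalar_mx.
Qed.

Unset Implicit Arguments.
Set Strict Implicit.

Theorem theorem6p3 (F : closedFieldType) (charF0 : [pchar F] =i pred0)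
  (d : nat) (V : racah_rep F d.+1) :
  is_racah_module V -> racah_irreducible V ->
  exists a b c : F, exists2 W : racah_rep F d.+1, is_Rd d a b c W & racah_iso W V.
Proof.
move=> HV irrV; have HV' := HV; case: HV' => _ [calpha cbeta _].
have two : (2 : F) != 0 by rewrite ((pcharf0P F).1 charF0 2).
have [al hal] := racah_central_scalar irrV calpha.
have [be hbe] := racah_central_scalar irrV cbeta.
have [de hde] := racah_central_scalar irrV (rdelta_central two HV).
have awAB := racah_aw_relA HV hal hde.
have awBA := racah_aw_relB HV hbe hde.
have [x [y [ph [Q Qu [ph0 phn QA QB]]]]] :=
  bidiagonal_basis charF0 awAB awBA (racah_pair_irreducible two HV irrV hde).
have [c [hdl hal' hbe' RdBE]] := leonard_params charF0 ph0 phn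
  (aw_rel_intertwine Qu QA QB awAB) (aw_rel_intertwine Qu QB QA awBA).
have Qtu : Q^T \in unitmx by rewrite unitmx_tr.
exists x, y, c, (conj_rep Q^T V); last exact: conj_rep_iso.
split; first split.
- exact: is_racah_module_conj.
- exact: mxconj_tr_intertwine Qu QA.
- by rewrite RdBE; exact: mxconj_tr_intertwine Qu QB.
split.
- by rewrite (conj_rep_alpha Qtu) hal (mxconj_scalar Qtu) hal'.
- by rewrite (conj_rep_beta Qtu) hbe (mxconj_scalar Qtu) -[be]opprK hbe' opprK.
- by rewrite conj_rep_delta hde (mxconj_scalar Qtu) hdl.
Qed.
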